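(* Write $\dfrac{(q;q)_\infty^4}{(q^2;q^2)_\infty^2(q^4;q^4)_\infty}=\sum_{n\ge0}a_nq^n$. Then for all $n\ge0$: $a_n>0$ if $n\equiv0,2\pmod4$, $a_n<0$ if $n\equiv1\pmod4$, and $a_n=0$ if $n\equiv3\pmod4$.
   Context: For $|q|<1$, $(a;q)_\infty=\prod_{k\ge0}(1-aq^k)$. *)

(* Formal power series in q with integer coefficients,
   handled through truncations by polynomials in {poly int}. *)
From mathcomp Require Import all_boot all_order all_algebra.
Set Implicit Arguments. Unset Strict Implicit. Unset Printing Implicit Defensive.
Import Order.TTheory GRing.Theory Num.Theory.
Local Open Scope ring_scope.

(* Truncation of (q^j;q^j)_oo = prod_{k>=0} (1 - q^{j(k+1)}) keeping the
   factors k+1 = 1..N; for j >= 1 it agrees with the infinite product in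
   all coefficients of degree <= N. *)
Definition poch_trunc (j N : nat) : {poly int} :=
  \prod_(1 <= k < N.+1) (1 - 'X^(k * j)).

(* Truncation of 1/(q^j;q^j)_oo = prod_{k>=1} sum_{i>=0} q^{ijk}; for j >= 1
   it agrees with the formal power series in all coefficients of degree <= N. *)
Definition inv_poch_trunc (j N : nat) : {poly int} :=
  \prod_(1 <= k < N.+1) \sum_(0 <= i < N.+1) 'X^(i * k * j).

Definition a_coef (n : nat) : int :=
  ((poch_trunc 1 n) ^+ 4 * (inv_poch_trunc 2 n) ^+ 2 * inv_poch_trunc 4 n)`_n.

(* Since (q;q)_oo = (q;q^2)_oo (q^2;q^2)_oo, letting n grow in the finite Jacobi
   triple product
     prod_(i < 2n) (1 - q^(2i+1))^2 = sum_k (-1)^k q^((k-2n)^2) [4n choose k]_(q^2)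
   gives Gauss's identity (q;q)_oo^2 / (q^2;q^2)_oo = sum_(j in Z) (-1)^j q^(j^2).
   So the series is theta(-q)^2 / (q^4;q^4)_oo with theta(q) = sum_j q^(j^2), and
   a_n = (-1)^n b_n where theta(q)^2 / (q^4;q^4)_oo = sum_n b_n q^n has nonnegative
   coefficients.  A sum of two squares is 0, 1 or 2 mod 4 and 1/(q^4;q^4)_oo only
   involves powers q^(4m), so b_n = 0 when n = 3 mod 4; otherwise the residue r of n
   is 0, 1^2 + 0^2 or 1^2 + 1^2, and the term q^r q^(n - r) gives b_n >= 1.
   Every identity is proved for truncations, as an equality of the coefficients of
   degree at most n. *)

From mathcomp Require Import all_boot all_order all_algebra.
From mathcomp Require Import zify ring.
Import Order.TTheory GRing.Theory Num.Theory.
Local Open Scope ring_scope.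
Set Implicit Arguments. Unset Strict Implicit.

(** * Power series modulo X^(n+1) *)

Section TruncatedEquality.
Variable R : nzRingType.
Implicit Types p q : {poly R}.

Definition eq_upto (n : nat) p q := forall i, (i <= n)%N -> p`_i = q`_i.

Lemma eq_upto_refl n p : eq_upto n p p. Proof. by []. Qed.

Lemma eq_upto_sym n p q : eq_upto n p q -> eq_upto n q p.
Proof. by move=> e i hi; rewrite e. Qed.

Lemma eq_upto_trans n p q r : eq_upto n p q -> eq_upto n q r -> eq_upto n p r.
Proof. by move=> e1 e2 i hi; rewrite e1 // e2. Qed.

Lemma eq_uptoD n p q p' q' : eq_upto n p p' -> eq_upto n q q' -> eq_upto n (p + q) (p' + q').
Proof. by move=> e1 e2 i hi; rewrite !coefD e1 // e2. Qed.

Lemma eq_uptoM n p q p' q' : eq_upto n p p' -> eq_upto n q q' -> eq_upto n (p * q) (p' * q').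
Proof.
move=> e1 e2 i hi; rewrite !coefM; apply: eq_bigr => k _.
have hk := ltn_ord k; rewrite e1 ?e2 //; lia.
Qed.

Lemma eq_upto_mulr1 n p q : eq_upto n q 1 -> eq_upto n (p * q) p.
Proof. by move=> e; rewrite -[X in eq_upto _ _ X]mulr1; apply: eq_uptoM. Qed.

Lemma eq_upto_sum n (I : Type) (r : seq I) (P : pred I) (F G : I -> {poly R}) :
  (forall i, P i -> eq_upto n (F i) (G i)) ->
  eq_upto n (\sum_(i <- r | P i) F i) (\sum_(i <- r | P i) G i).
Proof.
move=> e; elim/big_rec2: _ => [|i x y Pi exy]; first exact: eq_upto_refl.
exact: eq_uptoD (e _ Pi) exy.
Qed.

Lemma eq_upto_prod1 n (I : Type) (r : seq I) (P : pred I) (F : I -> {poly R}) :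
  (forall i, P i -> eq_upto n (F i) 1) -> eq_upto n (\prod_(i <- r | P i) F i) 1.
Proof.
move=> e; elim/big_rec: _ => [|i x Pi ex]; first exact: eq_upto_refl.
by rewrite -[1]mulr1; apply: eq_uptoM (e _ Pi) ex.
Qed.

Lemma eq_upto_XnM n k p : (n < k)%N -> eq_upto n ('X^k * p) 0.
Proof. by move=> hk i hi; rewrite coefXnM coef0 ifT //; lia. Qed.

Lemma eq_upto_1subXn n k : (n < k)%N -> eq_upto n (1 - 'X^k) 1.
Proof.
by move=> hk i hi; rewrite coefB coefXn (_ : i == k = false) ?subr0 //; apply/eqP; lia.
Qed.

End TruncatedEquality.

Lemma eq_upto_cancel (R : comNzRingType) n (p q u v : {poly R}) :
  eq_upto n (u * v) 1 -> eq_upto n (p * v) (q * v) -> eq_upto n p q.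
Proof.
move=> uv pq; apply: (@eq_upto_trans _ _ _ (p * v * u)).
  by apply: eq_upto_sym; rewrite -mulrA [v * u]mulrC; apply: eq_upto_mulr1.
apply: (@eq_upto_trans _ _ _ (q * v * u)); first exact: eq_uptoM.
by rewrite -mulrA [v * u]mulrC; apply: eq_upto_mulr1.
Qed.

Lemma coefM_eq0 (R : nzRingType) (p q : {poly R}) i :
  (forall j, (j <= i)%N -> p`_j = 0 \/ q`_(i - j) = 0) -> (p * q)`_i = 0.
Proof.
move=> h; rewrite coefM big1 // => j _.
by have [->|->] := h j (ltn_ord j); rewrite ?mul0r ?mulr0.
Qed.

Lemma coef_comp_polyNX (R : comNzRingType) (p : {poly R}) i :
  (p \Po (- 'X))`_i = (-1) ^+ i * p`_i.
Proof.
elim/poly_ind: p i => [|p c IH] i; first by rewrite comp_poly0 !coef0 mulr0.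
rewrite comp_poly_MXaddC !coefD !coefC mulrN coefN !coefMX.
case: i => [|i] /=; first by rewrite oppr0 add0r expr0 mul1r.
by rewrite IH !addr0 exprS mulN1r mulNr.
Qed.

Lemma poch_trunc0 d : poch_trunc d 0 = 1.
Proof. by rewrite /poch_trunc big_geq. Qed.

Lemma poch_truncS d m : poch_trunc d m.+1 = poch_trunc d m * (1 - 'X^(m.+1 * d)).
Proof. by rewrite /poch_trunc big_nat_recr. Qed.

Lemma coef0_poch_trunc d m : (0 < d)%N -> (poch_trunc d m)`_0 = 1.
Proof.
move=> d0; elim: m => [|m IH]; first by rewrite poch_trunc0 coef1.
rewrite poch_truncS coef0M IH mul1r coefB coef1 coefXn.
by have -> : (0 == m.+1 * d)%N = false by apply/eqP; nia.
Qed.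

Lemma poch_trunc_neq0 d m : (0 < d)%N -> poch_trunc d m != 0.
Proof. by move=> d0; apply/eqP => e; have := coef0_poch_trunc m d0; rewrite e coef0. Qed.

Lemma poch_trunc_upto d n m : (0 < d)%N -> (n <= m)%N ->
  eq_upto n (poch_trunc d m) (poch_trunc d n).
Proof.
move=> d0; elim: m => [|m IH] hm; first by have -> : n = 0%N by lia.
case: (ltnP n m.+1) => h; last by have -> : n = m.+1 by lia.
rewrite poch_truncS -[poch_trunc d n]mulr1; apply: eq_uptoM; first exact: IH.
by apply: eq_upto_1subXn; nia.
Qed.

Lemma inv_poch_truncK d n : (0 < d)%N ->
  eq_upto n (inv_poch_trunc d n * poch_trunc d n) 1.
Proof.
move=> d0; rewrite /inv_poch_trunc /poch_trunc -big_split /= big_nat_cond.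
apply: eq_upto_prod1 => k /andP[/andP[k1 _] _].
have -> : \sum_(0 <= i < n.+1) ('X^(i * k * d) : {poly int})
          = \sum_(i < n.+1) ('X^(k * d)) ^+ i.
  by rewrite big_mkord; apply: eq_bigr => i _; rewrite -exprM; congr ('X^_); lia.
rewrite mulrC -opprB mulNr -subrX1 opprB -exprM; apply: eq_upto_1subXn; nia.
Qed.

Definition odd_poch_trunc (m : nat) : {poly int} := \prod_(i < m) (1 - 'X^(i.*2.+1)).

Lemma odd_poch_truncM m : odd_poch_trunc m * poch_trunc 2 m = poch_trunc 1 m.*2.
Proof.
elim: m => [|m IH]; first by rewrite /odd_poch_trunc big_ord0 !poch_trunc0 mul1r.
rewrite /odd_poch_trunc big_ord_recr /= -/(odd_poch_trunc m) doubleS !poch_truncS -IH.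
rewrite !muln1 (_ : (m.+1 * 2 = m.*2.+2)%N); last by lia.
ring.
Qed.

(** * Gaussian binomial coefficients *)

Section GaussianBinomial.
Variable d : nat.

Fixpoint qbinom (m k : nat) {struct m} : {poly int} :=
  match k, m with
  | 0, _ => 1
  | _.+1, 0 => 0
  | k'.+1, m'.+1 => qbinom m' k' + 'X^(k * d) * qbinom m' k
  end.

Lemma qbinom0 m : qbinom m 0 = 1. Proof. by case: m. Qed.

Lemma qbinomS m k : qbinom m.+1 k.+1 = qbinom m k + 'X^(k.+1 * d) * qbinom m k.+1.
Proof. by []. Qed.

Lemma qbinom_small m k : (m < k)%N -> qbinom m k = 0.
Proof. by elim: m k => [|m IH] [|k] //= h; rewrite !IH ?mulr0 ?addr0 //; lia. Qed.

Lemma qbinomnn m : qbinom m m = 1.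
Proof. by elim: m => //= m ->; rewrite qbinom_small // mulr0 addr0. Qed.

Lemma Xn_split m k : (k <= m)%N ->
  ('X^(m.+1 * d) : {poly int}) = 'X^(k.+1 * d) * 'X^((m - k) * d).
Proof. by move=> h; rewrite -exprD; congr ('X^_); nia. Qed.

Lemma qbinom_poch m k : (k <= m)%N ->
  qbinom m k * poch_trunc d k * poch_trunc d (m - k) = poch_trunc d m.
Proof.
elim: m k => [|m IH] [|k] h //=; rewrite ?poch_trunc0 ?mulr1 ?mul1r ?subn0 //.
rewrite subSS mulrDl mulrDl.
have -> : qbinom m k * poch_trunc d k.+1 * poch_trunc d (m - k)
          = poch_trunc d m * (1 - 'X^(k.+1 * d)).
  by rewrite poch_truncS -(IH k); [ring | lia].
rewrite (poch_truncS d m).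
case: (ltnP k m) => hk; last first.
  have -> : k = m by lia.
  by rewrite qbinom_small // mulr0 !mul0r addr0.
have -> : 'X^(k.+1 * d) * qbinom m k.+1 * poch_trunc d k.+1 * poch_trunc d (m - k)
          = 'X^(k.+1 * d) * (poch_trunc d m * (1 - 'X^((m - k) * d))).
  rewrite (_ : m - k = (m - k.+1).+1)%N; last by lia.
  by rewrite (poch_truncS d (m - k.+1)) -(IH k.+1 hk); ring.
rewrite (Xn_split (ltnW hk)); ring.
Qed.

Hypothesis d_gt0 : (0 < d)%N.

(* Both sides times (q^d;q^d)_(k+1) (q^d;q^d)_(m-k) equal (q^d;q^d)_(m+1),
   by [qbinom_poch] applied to m, k and to m, k+1. *)
Lemma qbinomS_dual m k :
  qbinom m.+1 k.+1 = 'X^((m - k) * d) * qbinom m k + qbinom m k.+1.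
Proof.
case: (ltngtP k m) => hk; last first.
- by rewrite hk !qbinomnn subnn mul1r qbinom_small // addr0.
- by rewrite !qbinom_small ?mulr0 ?addr0 //; lia.
apply: (mulIf (poch_trunc_neq0 (m - k) d_gt0)).
apply: (mulIf (poch_trunc_neq0 k.+1 d_gt0)).
rewrite -mulrA [_ * poch_trunc d k.+1]mulrC mulrA -[(m - k)%N]subSS.
rewrite qbinom_poch; last by lia.
rewrite subSS poch_truncS (Xn_split (ltnW hk)).
have e1 := qbinom_poch (ltnW hk); have e2 := qbinom_poch hk.
rewrite (_ : (m - k = (m - k.+1).+1)%N) in e1 *; last by lia.
rewrite !poch_truncS in e1 e2 *.
set x := 'X^(k.+1 * d) in e2 *; set y := 'X^(_.+1 * d) in e1 *.
transitivity (y * (1 - x) * (qbinom m k * poch_trunc d k * (poch_trunc d (m - k.+1) * (1 - y)))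
  + (1 - y) * (qbinom m k.+1 * (poch_trunc d k * (1 - x)) * poch_trunc d (m - k.+1))).
  by rewrite e1 e2; ring.
ring.
Qed.

Lemma qbinomSS m k : qbinom m.+2 k.+2 = 'X^((m - k) * d) * qbinom m k
  + (1 + 'X^(m.+1 * d)) * qbinom m k.+1 + 'X^(k.+2 * d) * qbinom m k.+2.
Proof.
rewrite qbinomS !qbinomS_dual.
case: (ltnP k m) => hk; last by rewrite (qbinom_small (k := k.+1)) //; ring.
rewrite (Xn_split hk) (_ : (m - k = (m - k.+1).+1)%N); last by lia.
ring.
Qed.

Lemma qbinomS1 m :
  qbinom m.+2 1 = (1 + 'X^(m.+1 * d)) * qbinom m 0 + 'X^(1 * d) * qbinom m 1.
Proof. by rewrite qbinomS qbinomS_dual (Xn_split (leq0n m)) subn0 !qbinom0; ring. Qed.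

Lemma qbinom_upto n m k : (n <= k)%N -> (n <= m - k)%N -> (k <= m)%N ->
  eq_upto n (qbinom m k) (inv_poch_trunc d n).
Proof.
move=> hk hmk km; set P := poch_trunc d n; set I := inv_poch_trunc d n.
have IP : eq_upto n (I * I * (P * P)) 1.
  by rewrite mulrACA -[1]mulr1; apply: eq_uptoM; apply: inv_poch_truncK.
have Pm : eq_upto n (poch_trunc d m) P := poch_trunc_upto d_gt0 (leq_trans hk km).
apply: (eq_upto_cancel IP); apply: (@eq_upto_trans _ _ _ P).
  apply: eq_upto_trans Pm; rewrite -(qbinom_poch km) -mulrA; apply: eq_uptoM => //.
  by apply: eq_uptoM; apply: eq_upto_sym; apply: poch_trunc_upto.
by apply: eq_upto_sym; rewrite mulrA mulrC; apply: eq_upto_mulr1; apply: inv_poch_truncK.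
Qed.

End GaussianBinomial.

Arguments qbinom d m k : simpl never.

(** * The finite Jacobi triple product and Gauss's identity *)

(* (k - m)^2; one of the two truncated differences is 0. *)
Definition sqdist (m k : nat) : nat := ((k - m) * (k - m) + (m - k) * (m - k))%N.

(* prod_(i < n) (x + q^(2i+1)) (1 + x q^(2i+1)), with x the outer variable. *)
Definition jacobi_trunc (n : nat) : {poly {poly int}} :=
  \prod_(i < n) ((('X^(i.*2.+1))%:P + 'X) * (1 + ('X^(i.*2.+1))%:P * 'X)).

Lemma coefM_jacobi_factor (p : {poly {poly int}}) (a : {poly int}) k :
  (p * ((a%:P + 'X) * (1 + a%:P * 'X)))`_k = p`_k * a
    + (if k is k'.+1 then p`_k' * (1 + a ^+ 2) else 0)
    + (if k is k'.+2 then p`_k' * a else 0).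
Proof.
have -> : (a%:P + 'X) * (1 + a%:P * 'X) = a%:P + (1 + a ^+ 2)%:P * 'X + a%:P * 'X^2.
  by rewrite rmorphD rmorph1 rmorphXn; ring.
rewrite !mulrDr !coefD !mulrA !coefMX !coefMC.
by case: k => [|[|k]] //=; rewrite ?addr0 ?coefMC.
Qed.

Lemma coef_jacobi_trunc n k :
  (jacobi_trunc n)`_k = 'X^(sqdist n k) * qbinom 2 n.*2 k.
Proof.
elim: n k => [|n IH] k.
  by rewrite /jacobi_trunc big_ord0 coef1; case: k => [|k]; rewrite ?mulr0 // mulr1 expr0.
rewrite /jacobi_trunc big_ord_recr /= -/(jacobi_trunc n) coefM_jacobi_factor.
rewrite -exprM doubleS.
case: k => [|[|k]] /=; rewrite !IH.
- by rewrite !qbinom0 !mulr1 !addr0 -exprD; congr (GRing.exp _ _); rewrite /sqdist; nia.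
- rewrite (qbinomS1 (d := 2)) // addr0.
  have -> : sqdist n.+1 1 = sqdist n 0 by rewrite /sqdist; nia.
  have e : ('X^(sqdist n 1) : {poly int}) * 'X^(n.*2.+1) = 'X^(sqdist n 0) * 'X^(1 * 2).
    by rewrite -!exprD; congr (GRing.exp _ _); rewrite /sqdist; nia.
  by rewrite mulrAC e; ring.
- rewrite (qbinomSS (d := 2)) //.
  have -> : sqdist n.+1 k.+2 = sqdist n k.+1 by rewrite /sqdist; nia.
  have e2 : ('X^(sqdist n k.+2) : {poly int}) * 'X^(n.*2.+1)
            = 'X^(sqdist n k.+1) * 'X^(k.+2 * 2).
    by rewrite -!exprD; congr (GRing.exp _ _); rewrite /sqdist; nia.
  rewrite [_ * _ * 'X^(n.*2.+1)]mulrAC e2.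
  case: (leqP k n.*2) => hk; last by rewrite (@qbinom_small 2 n.*2 k) //; ring.
  have e0 : ('X^(sqdist n k) : {poly int}) * 'X^(n.*2.+1)
            = 'X^(sqdist n k.+1) * 'X^((n.*2 - k) * 2).
    by rewrite -!exprD; congr (GRing.exp _ _); rewrite /sqdist; nia.
  by rewrite [_ * _ * 'X^(n.*2.+1)]mulrAC e0; ring.
Qed.

Lemma horner_jacobi_trunc n : (jacobi_trunc n.*2).[-1] = odd_poch_trunc n.*2 ^+ 2.
Proof.
have factor (a : {poly int}) : ((a%:P + 'X) * (1 + a%:P * 'X)).[-1] = - (1 - a) ^+ 2.
  by rewrite hornerM !hornerD hornerMX !hornerC hornerX; ring.
rewrite /jacobi_trunc horner_prod (eq_bigr _ (fun i _ => factor _)).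
by rewrite prodrN card_ord -signr_odd odd_double expr0 mul1r prodrXl.
Qed.

Lemma horner_jacobi_trunc_sum n : (jacobi_trunc n).[-1] =
  \sum_(k < n.*2.+1) (-1) ^+ k * ('X^(sqdist n k) * qbinom 2 n.*2 k).
Proof.
rewrite (@horner_coef_wide _ n.*2.+1); last first.
  by apply/leq_sizeP => k hk; rewrite coef_jacobi_trunc qbinom_small ?mulr0.
by apply: eq_bigr => k _; rewrite coef_jacobi_trunc mulrC.
Qed.

(* sum_(|j| <= 2n) q^(j^2), indexed by k = j + 2n. *)
Definition theta_trunc (n : nat) : {poly int} := \sum_(k < n.*2.*2.+1) 'X^(sqdist n.*2 k).

Lemma odd_sqdist m k : ~~ odd m -> odd (sqdist m k) = odd k.
Proof.
move=> hm; rewrite /sqdist; case: (leqP m k) => h.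
  rewrite (_ : (m - k = 0)%N); last by lia.
  by rewrite addn0 oddM andbb oddB // (negPf hm) addbF.
rewrite (_ : (k - m = 0)%N); last by lia.
by rewrite add0n oddM andbb oddB ?(negPf hm) //; lia.
Qed.

Lemma theta_trunc_NX n :
  theta_trunc n \Po (- 'X) = \sum_(k < n.*2.*2.+1) (-1) ^+ k * 'X^(sqdist n.*2 k).
Proof.
rewrite rmorph_sum; apply: eq_bigr => k _.
rewrite rmorphXn /= comp_polyX (exprNn 'X) -[in LHS]signr_odd.
by rewrite odd_sqdist ?odd_double ?signr_odd.
Qed.

(* Terms with (k - 2n)^2 > n vanish below degree n + 1; the others have
   n <= k <= 3n, where the Gaussian binomial agrees with 1/(q^2;q^2). *)
Lemma horner_jacobi_trunc_upto n :
  eq_upto n ((jacobi_trunc n.*2).[-1]) ((theta_trunc n \Po (- 'X)) * inv_poch_trunc 2 n).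
Proof.
rewrite horner_jacobi_trunc_sum theta_trunc_NX mulr_suml; apply: eq_upto_sum => k _.
case: (leqP (sqdist n.*2 k) n) => h.
  have [hk1 hk2 hk3] : [/\ n <= k, n <= n.*2.*2 - k & k <= n.*2.*2]%N.
    have sq x : (x * x <= n -> x <= n)%N by case: x => // x; nia.
    have h1 : (k - n.*2 <= n)%N by apply: sq; move: h; rewrite /sqdist; lia.
    have h2 : (n.*2 - k <= n)%N by apply: sq; move: h; rewrite /sqdist; lia.
    by split; lia.
  by rewrite mulrA; apply: eq_uptoM => //; apply: qbinom_upto.
apply: (@eq_upto_trans _ _ _ 0).
  by rewrite mulrCA; apply: eq_upto_XnM.
by apply: eq_upto_sym; rewrite mulrAC mulrC; apply: eq_upto_XnM.
Qed.

Lemma gauss_upto n : eq_upto n (poch_trunc 1 n ^+ 2 * inv_poch_trunc 2 n)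
  (theta_trunc n \Po (- 'X)).
Proof.
set I := inv_poch_trunc 2 n; set P := poch_trunc 2 n.
have IP : eq_upto n (I * P) 1 by apply: inv_poch_truncK.
apply: (eq_upto_cancel IP).
have P1 : eq_upto n (poch_trunc 1 n) (odd_poch_trunc n.*2 * P).
  apply: (@eq_upto_trans _ _ _ (poch_trunc 1 n.*2.*2)).
    by apply: eq_upto_sym; apply: poch_trunc_upto => //; rewrite -!addnn; lia.
  rewrite -odd_poch_truncM; apply: eq_uptoM => //.
  by apply: poch_trunc_upto => //; rewrite -addnn leq_addr.
apply: (@eq_upto_trans _ _ _ ((odd_poch_trunc n.*2 * P) ^+ 2 * I * P)).
  by apply: eq_uptoM => //; apply: eq_uptoM => //; rewrite !expr2; apply: eq_uptoM.
rewrite exprMn -horner_jacobi_trunc.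
set T := theta_trunc n \Po (- 'X).
have IP2 : eq_upto n (I * P * (I * P)) 1 by rewrite -[1]mulr1; apply: eq_uptoM.
apply: (@eq_upto_trans _ _ _ (T * I * (P * (I * P) * P))).
  rewrite (_ : _ * _ * _ * P = (jacobi_trunc n.*2).[-1] * (P * (I * P) * P)); last by ring.
  by apply: eq_uptoM => //; apply: horner_jacobi_trunc_upto.
rewrite (_ : T * I * _ = T * P * (I * P * (I * P))); last by ring.
exact: eq_upto_mulr1.
Qed.

Lemma inv_poch_trunc_NX d n : ~~ odd d -> inv_poch_trunc d n \Po (- 'X) = inv_poch_trunc d n.
Proof.
move=> hd; rewrite rmorph_prod; apply: eq_bigr => k _.
rewrite rmorph_sum; apply: eq_bigr => i _.
by rewrite rmorphXn /= comp_polyX (exprNn 'X) -signr_odd oddM (negPf hd) andbF expr0 mul1r.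
Qed.

Lemma a_coef_theta n :
  a_coef n = (-1) ^+ n * (theta_trunc n ^+ 2 * inv_poch_trunc 4 n)`_n.
Proof.
have e : eq_upto n (poch_trunc 1 n ^+ 4 * inv_poch_trunc 2 n ^+ 2 * inv_poch_trunc 4 n)
                   ((theta_trunc n ^+ 2 * inv_poch_trunc 4 n) \Po (- 'X)).
  rewrite rmorphM rmorphXn /= inv_poch_trunc_NX //.
  rewrite (_ : _ ^+ 4 * _ ^+ 2 = (poch_trunc 1 n ^+ 2 * inv_poch_trunc 2 n) ^+ 2);
    last by ring.
  by apply: eq_uptoM => //; rewrite !expr2; apply: eq_uptoM; apply: gauss_upto.
by rewrite /a_coef e // coef_comp_polyNX.
Qed.

(** * Signs of the coefficients *)

Section NonnegCoefficients.
Variable R : numDomainType.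
Implicit Types p q : {poly R}.

Definition nonneg_coefs p := forall i, 0 <= p`_i.

Lemma nonneg_coefsM p q : nonneg_coefs p -> nonneg_coefs q -> nonneg_coefs (p * q).
Proof. by move=> hp hq i; rewrite coefM; apply: sumr_ge0 => j _; apply: mulr_ge0. Qed.

Lemma nonneg_coefs_prod (I : Type) (r : seq I) (F : I -> {poly R}) :
  (forall i, nonneg_coefs (F i)) -> nonneg_coefs (\prod_(i <- r) F i).
Proof.
move=> hF; apply: big_ind => //; last exact: nonneg_coefsM.
by move=> i; rewrite coef1; case: (i == 0%N).
Qed.

Lemma nonneg_coefs_sumXn (I : Type) (r : seq I) (f : I -> nat) :
  nonneg_coefs (\sum_(i <- r) 'X^(f i)).
Proof. by move=> k; rewrite coef_sum; apply: sumr_ge0 => i _; rewrite coefXn ler0n. Qed.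

Lemma coef_sumXn_ge1 (I : eqType) (r : seq I) (f : I -> nat) i :
  i \in r -> 1 <= (\sum_(j <- r) ('X^(f j) : {poly R}))`_(f i).
Proof.
move=> ir; rewrite coef_sum (big_rem i) //= coefXn eqxx lerDl.
by apply: sumr_ge0 => j _; rewrite coefXn ler0n.
Qed.

Lemma coefM_ge1 p q a b : nonneg_coefs p -> nonneg_coefs q ->
  1 <= p`_a -> 1 <= q`_b -> 1 <= (p * q)`_(a + b).
Proof.
move=> hp hq pa qb; rewrite coefM.
have ha : (a < (a + b).+1)%N by rewrite ltnS leq_addr.
rewrite (bigD1 (Ordinal ha)) //= addKn; apply: le_trans (mulr_ege1 pa qb) _.
by rewrite lerDl; apply: sumr_ge0 => j _; apply: mulr_ge0.
Qed.

Lemma coef_prod_ge1 (I : Type) (r : seq I) (F : I -> {poly R}) (e : I -> nat) :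
  (forall i, nonneg_coefs (F i)) -> (forall i, 1 <= (F i)`_(e i)) ->
  1 <= (\prod_(i <- r) F i)`_(\sum_(i <- r) e i).
Proof.
move=> hF he; elim: r => [|i r IH]; first by rewrite !big_nil coef1.
by rewrite !big_cons; apply: coefM_ge1 => //; apply: nonneg_coefs_prod.
Qed.

End NonnegCoefficients.

Lemma sqdist_mod4 m k : (sqdist m k %% 4 < 2)%N.
Proof.
have sq x : ((x * x) %% 4 < 2)%N.
  by rewrite -modnMm; case: (x %% 4)%N (@ltn_pmod x 4 isT) => [|[|[|[|]]]].
rewrite /sqdist; case: (leqP m k) => h.
  by rewrite (_ : (m - k = 0)%N) ?addn0; [apply: sq | lia].
by rewrite (_ : (k - m = 0)%N) ?add0n; [apply: sq | lia].
Qed.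

Lemma coef_theta_trunc_eq0 n i : (2 <= i %% 4)%N -> (theta_trunc n)`_i = 0.
Proof.
move=> hi; rewrite coef_sum big1 // => k _; rewrite coefXn.
by case: eqP => // e; have := sqdist_mod4 n.*2 k; rewrite -e; lia.
Qed.

Lemma coef_theta_trunc_sq_ge1 n i : (i <= n.*2)%N -> 1 <= (theta_trunc n)`_(i * i).
Proof.
move=> hi; have hk : (n.*2 + i < n.*2.*2.+1)%N by rewrite -[n.*2.*2]addnn; lia.
rewrite (_ : (i * i = sqdist n.*2 (Ordinal hk))%N); last by rewrite /sqdist /=; nia.
exact: coef_sumXn_ge1 (mem_index_enum _).
Qed.

Lemma nonneg_coefs_theta_trunc n : nonneg_coefs (theta_trunc n).
Proof. exact: nonneg_coefs_sumXn. Qed.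

Lemma nonneg_coefs_inv_poch_trunc d n : nonneg_coefs (inv_poch_trunc d n).
Proof. by apply: nonneg_coefs_prod => k; apply: nonneg_coefs_sumXn. Qed.

Lemma coef_theta_trunc2_ge1 n r : (r <= 2)%N -> (r <= n.*2)%N ->
  1 <= (theta_trunc n ^+ 2)`_r.
Proof.
move=> r2 rn.
have [a [b [-> ha hb]]] :
    exists a b, [/\ r = a * a + b * b, a <= n.*2 & b <= n.*2]%N.
  case: r r2 rn => [|[|[|r]]] // _ hn;
    [exists 0%N, 0%N | exists 1%N, 0%N | exists 1%N, 1%N]; by split; lia.
by rewrite expr2; apply: coefM_ge1;
  [exact: nonneg_coefs_theta_trunc | exact: nonneg_coefs_theta_trunc
  | exact: coef_theta_trunc_sq_ge1 | exact: coef_theta_trunc_sq_ge1].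
Qed.

Lemma coef_inv_poch_trunc_ge1 d n m : (m <= n)%N -> 1 <= (inv_poch_trunc d n)`_(m * d).
Proof.
move=> hm; set e := fun k => if k == 1%N then (m * d)%N else 0%N.
have -> : (m * d = \sum_(1 <= k < n.+1) e k)%N.
  case: n hm => [|n] hm; first by rewrite big_geq //; lia.
  rewrite big_ltn // {1}/e eqxx big_nat_cond big1 ?addn0 // => k /andP[/andP[k2 _] _].
  by rewrite /e ifF //; apply/eqP; lia.
apply: coef_prod_ge1 => k; first exact: nonneg_coefs_sumXn.
rewrite /e; case: eqP => [->|_].
  rewrite -{1}[m]muln1; apply: coef_sumXn_ge1.
  by rewrite mem_index_iota; lia.
by rewrite -(mul0n (k * d)) mulnA; apply: coef_sumXn_ge1.
Qed.

Lemma coef_inv_poch_trunc_eq0 d n i : ~~ (d %| i)%N -> (inv_poch_trunc d n)`_i = 0.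
Proof.
rewrite /inv_poch_trunc; elim/big_rec: _ i => [|k p _ IH] i hi.
  by rewrite coef1; case: i hi => [|i]; rewrite ?dvdn0.
apply: coefM_eq0 => j hj; have [dj|ndj] := boolP (d %| j)%N.
  right; apply: IH; apply: contra hi => dij.
  by rewrite -(subnK hj) dvdn_add.
left; rewrite coef_sum big1 // => l _; rewrite coefXn.
by case: eqP => // ej; move: ndj; rewrite ej dvdn_mull.
Qed.

Lemma coef_theta2_inv_poch4_ge1 n N i : (i %% 4 != 3)%N -> (i %% 4 <= n.*2)%N ->
  (i %/ 4 <= N)%N -> 1 <= (theta_trunc n ^+ 2 * inv_poch_trunc 4 N)`_i.
Proof.
move=> h3 hn hN; rewrite (divn_eq i 4) addnC.
apply: coefM_ge1.
- by rewrite expr2; apply: nonneg_coefsM; apply: nonneg_coefs_theta_trunc.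
- exact: nonneg_coefs_inv_poch_trunc.
- by apply: coef_theta_trunc2_ge1 => //; have := ltn_pmod i (isT : (0 < 4)%N); lia.
- exact: coef_inv_poch_trunc_ge1.
Qed.

(* Sums of two squares avoid the residue 3 modulo 4. *)
Lemma coef_theta2_inv_poch4_eq0 n N i : (i %% 4 = 3)%N ->
  (theta_trunc n ^+ 2 * inv_poch_trunc 4 N)`_i = 0.
Proof.
move=> h3; apply: coefM_eq0 => j hj.
have [h4|h4] := boolP (4 %| i - j)%N; last by right; apply: coef_inv_poch_trunc_eq0.
left; rewrite expr2; apply: coefM_eq0 => a ha.
case: (leqP 2 (a %% 4)) => h1; first by left; apply: coef_theta_trunc_eq0.
case: (leqP 2 ((j - a) %% 4)) => h2; first by right; apply: coef_theta_trunc_eq0.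
by exfalso; move: h4; lia.
Qed.

Theorem theorem1p3 : forall n : nat,
  (((n %% 4 = 0)%N \/ (n %% 4 = 2)%N) -> 0 < a_coef n) /\
  ((n %% 4 = 1)%N -> a_coef n < 0) /\
  ((n %% 4 = 3)%N -> a_coef n = 0).
Proof.
move=> n; rewrite a_coef_theta -signr_odd -(odd_mod n (erefl : odd 4 = false)).
have pos : (n %% 4 != 3)%N -> 0 < (theta_trunc n ^+ 2 * inv_poch_trunc 4 n)`_n.
  move=> h; apply: lt_le_trans (coef_theta2_inv_poch4_ge1 h _ _) => //.
    by have := leq_mod n 4; rewrite -addnn; lia.
  exact: leq_div.
split; [|split] => h.
- by case: h => e; rewrite e expr0 mul1r; apply: pos; rewrite e.
- by rewrite h expr1 mulN1r oppr_lt0; apply: pos; rewrite h.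
- by rewrite coef_theta2_inv_poch4_eq0 ?mulr0.
Qed.
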